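(* Let $\mathcal{S}=(T,T^+)$ be a concrete regularity structure, let $M=(\Pi,g)$ be a model over $\mathcal{S}$, let $\gamma\in\mathbb{R}$, and let $\mathbf{v}\in\mathcal{D}^\gamma(\mathcal{S},g)$. Set $\Lambda_x=\Pi_x(\mathbf{v}(x))$ for $x\in\mathbb{R}^d$. Then the family $(\Lambda_x)_{x\in\mathbb{R}^d}$ satisfies the $\gamma$-coherence estimate: there exists $C<\infty$ such that for all $x,y\in\mathbb{R}^d$ and all $0<t\le1$, $$\big|\langle\Lambda_y-\Lambda_x,p_t(x,\cdot)\rangle\big|\le C\sum_{\tau\in\mathbf{B},\,|\tau|<\gamma}t^{|\tau|/2}\big(|y-x|+t^{1/2}\big)^{\gamma-|\tau|}.$$
   Context: $p_t(x,y)$ is the heat kernel on $\mathbb{R}^d$ and $\langle\cdot,\cdot\rangle$ the distribution/test-function pairing. A concrete regularity structure $\mathcal{S}=(T,T^+)$ consists of graded vector spaces $T=\bigoplus_{a\in A}T_a$ and $T^+=\bigoplus_{\alpha\in A^+}T^+_\alpha$ with each $T_a$, $T^+_\alpha$ finite dimensional, where $A\subset\mathbb{R}$ is locally finite and bounded below and $A^+\subset[0,\infty)$ contains $0$; $T^+$ is a Hopf algebra with coproduct $\Delta^+:T^+\to T^+\otimes T^+$, unit $\mathbf{1}_+$ and counit $\mathbf{1}'_+$; and there is a linear map $\Delta:T\to T\otimes T^+$ with $(\Delta\otimes\mathrm{Id})\Delta=(\mathrm{Id}\otimes\Delta^+)\Delta$, $(\mathrm{Id}\otimes\mathbf{1}'_+)\Delta=\mathrm{Id}$,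 and $\Delta T_a\subset\bigoplus_{\alpha\in A^+}T_{a-\alpha}\otimes T^+_\alpha$ for all $a\in A$. Fix a basis $\mathbf{B}_a$ of each $T_a$ and let $\mathbf{B}=\bigcup_a\mathbf{B}_a$; for $\tau\in\mathbf{B}_a$ write $|\tau|=a$; for $h\in T$ write $h_\tau$ for its coefficient on $\tau\in\mathbf{B}$; let $\mathbf{B}^+$ be a similarly graded basis of $T^+$. $G^+$ is the set of real-valued linear multiplicative maps on $T^+$. A model $M=(\Pi,g)$ is a family of linear maps $\Pi_x:T\to\mathcal{S}'(\mathbb{R}^d)$ ($x\in\mathbb{R}^d$) and characters $g_{yx}\in G^+$ ($x,y\in\mathbb{R}^d$) such that $(g_{zy}\otimes g_{yx})\Delta^+=g_{zx}$ and, with $\Gamma_{yx}=(\mathrm{Id}\otimes g_{yx})\Delta:T\to T$, one has $\Pi_x(\tau)=\Pi_y(\Gamma_{yx}\tau)$ for all $x,y,z$ and $\tau\in T$; and for each $c\in\mathbb{R}$, $\sup_{\mu\in\mathbf{B}^+,|\mu|\le c}\sup_{x,y}|g_{yx}(\mu)|/|y-x|^{|\mu|}<\infty$ and $\sup_{\tau\in\mathbf{B},|\tau|\le c}\sup_{0<t\le1}\sup_x t^{-|\tau|/2}|\langle\Pi_x(\tau),p_t(x,\cdot)\rangle|<\infty$. With $T_{<\gamma}=\bigoplus_{a<\gamma}T_a$, $\mathcal{D}^\gamma(\mathcal{S},g)$ is the space of functions $\mathbf{v}:\mathbb{R}^d\to T_{<\gamma}$ with $\max_{\tau\in\mathbf{B},|\tau|<\gamma}\sup_{x\neq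 y}\big(|\mathbf{v}(x)_\tau|+|(\mathbf{v}(y)-\Gamma_{yx}\mathbf{v}(x))_\tau|/|y-x|^{\gamma-|\tau|}\big)<\infty$. A family $(\Lambda_x)$ of distributions satisfies the $\gamma$-coherence estimate if there are finitely many exponents $\beta_i\le\gamma$ and $C$ with $|\langle\Lambda_y-\Lambda_x,p_t(x,\cdot)\rangle|\le C\sum_it^{\beta_i/2}(|y-x|+t^{1/2})^{\gamma-\beta_i}$ for all $x,y$ and $0<t\le1$. *)

From HB Require Import structures.
From mathcomp Require Import all_boot all_order all_algebra.
From mathcomp Require Import all_classical all_reals all_analysis.
Set Implicit Arguments. Unset Strict Implicit. Unset Printing Implicit Defensive.
Import Order.TTheory GRing.Theory Num.Theory.
Local Open Scope classical_set_scope.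
Local Open Scope ring_scope.

Section Defs.
Variables (R : realType) (d : nat).

Definition enorm (x : 'rV[R]_d) : R := Num.sqrt (\sum_(i < d) x ord0 i ^+ 2).

Definition heat (t : R) (x y : 'rV[R]_d) : R :=
  (4 * pi * t) `^ (- (d%:R / 2)) * expR (- (enorm (x - y) ^+ 2) / (4 * t)).

(* Distributions are represented by their action on test functions;
   <Lambda, phi> := Lambda phi. *)
Definition Dist := ('rV[R]_d -> R) -> R.

Definition pair_heat (L : Dist) (t : R) (x : 'rV[R]_d) : R := L (heat t x).

Definition dirac_coef (I : eqType) (i j : I) : R := (i == j)%:R.

(* A concrete regularity structure, described in bases.                      *)
(*  I : index set of the graded basis B of T, deg i = |i|.                   *)
(*  J : index set of the graded basis B^+ of T^+, degp j = |j|.              *)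
(*  Elements of T (resp. T^+) are finitely supported coefficient functions.  *)
(*  mulc a b k  : coefficient of b_k in b_a * b_b  (product of T^+)          *)
(*  unitp k     : coefficient of b_k in 1_+                                  *)
(*  counit k    : 1'_+ (b_k)                                                 *)
(*  cop k i j   : coefficient of b_i (x) b_j in Delta^+ b_k                  *)
(*  antip k j   : coefficient of b_j in S(b_k) (antipode)                    *)
(*  copT t s m  : coefficient of b_s (x) b_m in Delta b_t                    *)
Definition is_concrete_reg_structure (I J : choiceType)
  (deg : I -> R) (degp : J -> R)
  (mulc : J -> J -> J -> R) (unitp : J -> R) (counit : J -> R)
  (cop : J -> J -> J -> R) (antip : J -> J -> R)
  (copT : I -> I -> J -> R) : Prop :=
  (* T = (+)_{a in A} T_a, A locally finite bounded below, T_a finite dim *)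
  (forall c : R, finite_set [set i : I | deg i <= c]) /\
  (* T^+ graded by A^+ in [0,oo), each T^+_alpha finite dimensional *)
  (forall j : J, 0 <= degp j) /\
  (forall al : R, finite_set [set j : J | degp j = al]) /\
  (forall a b : J, finite_set [set k : J | mulc a b k != 0]) /\
  finite_set [set k : J | unitp k != 0] /\
  (forall a b c k : J,
     \sum_(m \in [set: J]) mulc a b m * mulc m c k
     = \sum_(m \in [set: J]) mulc b c m * mulc a m k) /\
  (forall b k : J, \sum_(m \in [set: J]) unitp m * mulc m b k = dirac_coef b k) /\
  (forall b k : J, \sum_(m \in [set: J]) unitp m * mulc b m k = dirac_coef b k) /\
  (forall k : J, finite_set [set p : J * J | cop k p.1 p.2 != 0]) /\
  (forall k j1 j2 j3 : J,
     \sum_(m \in [set: J]) cop k m j3 * cop m j1 j2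
     = \sum_(m \in [set: J]) cop k j1 m * cop m j2 j3) /\
  (forall k j : J, \sum_(m \in [set: J]) cop k m j * counit m = dirac_coef j k) /\
  (forall k j : J, \sum_(m \in [set: J]) cop k j m * counit m = dirac_coef j k) /\
  (forall a b j1 j2 : J,
     \sum_(k \in [set: J]) mulc a b k * cop k j1 j2
     = \sum_(p \in [set: J * J]) \sum_(q \in [set: J * J])
         cop a p.1 p.2 * cop b q.1 q.2 * mulc p.1 q.1 j1 * mulc p.2 q.2 j2) /\
  (forall j1 j2 : J,
     \sum_(k \in [set: J]) unitp k * cop k j1 j2 = unitp j1 * unitp j2) /\
  (forall a b : J,
     \sum_(k \in [set: J]) mulc a b k * counit k = counit a * counit b) /\
  (\sum_(k \in [set: J]) unitp k * counit k = 1) /\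
  (forall k : J, finite_set [set j : J | antip k j != 0]) /\
  (forall k j : J,
     \sum_(p \in [set: J * J])
        (cop k p.1 p.2 * \sum_(m \in [set: J]) antip p.1 m * mulc m p.2 j)
     = counit k * unitp j) /\
  (forall k j : J,
     \sum_(p \in [set: J * J])
        (cop k p.1 p.2 * \sum_(m \in [set: J]) antip p.2 m * mulc p.1 m j)
     = counit k * unitp j) /\
  (forall t : I, finite_set [set p : I * J | copT t p.1 p.2 != 0]) /\
  (forall (t s : I) (m : J), copT t s m != 0 -> deg s = deg t - degp m) /\
  (forall (t s : I) (m1 m2 : J),
     \sum_(r \in [set: I]) copT t r m2 * copT r s m1
     = \sum_(n \in [set: J]) copT t s n * cop n m1 m2) /\
  (forall t s : I, \sum_(m \in [set: J]) copT t s m * counit m = dirac_coef s t).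

(* g : J -> R is (the values on the basis of) a character in G^+ *)
Definition is_character (J : choiceType) (mulc : J -> J -> J -> R)
  (unitp : J -> R) (g : J -> R) : Prop :=
  (forall a b : J, \sum_(k \in [set: J]) mulc a b k * g k = g a * g b) /\
  \sum_(k \in [set: J]) unitp k * g k = 1.

(* Gamma_{yx} = (Id (x) g_{yx}) Delta, acting on coefficient functions *)
Definition Gam (I J : choiceType) (copT : I -> I -> J -> R) (gyx : J -> R)
  (h : I -> R) (s : I) : R :=
  \sum_(p \in [set: I * J]) h p.1 * copT p.1 s p.2 * gyx p.2.

Definition PiT (I : choiceType) (Pib : I -> Dist) (h : I -> R) : Dist :=
  fun phi => \sum_(i \in [set: I]) h i * Pib i phi.

(* M = (Pi, g) is a model; Pib x i = Pi_x(b_i), g y x = g_{yx} *)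
Definition is_model (I J : choiceType)
  (deg : I -> R) (degp : J -> R) (mulc : J -> J -> J -> R) (unitp : J -> R)
  (cop : J -> J -> J -> R) (copT : I -> I -> J -> R)
  (Pib : 'rV[R]_d -> I -> Dist) (g : 'rV[R]_d -> 'rV[R]_d -> J -> R) : Prop :=
  (forall x y : 'rV[R]_d, is_character mulc unitp (g y x)) /\
  (forall (x y z : 'rV[R]_d) (k : J),
     \sum_(p \in [set: J * J]) cop k p.1 p.2 * g z y p.1 * g y x p.2 = g z x k) /\
  (forall (x y : 'rV[R]_d) (t : I),
     Pib x t = PiT (Pib y) (Gam copT (g y x) (dirac_coef t))) /\
  (forall c : R, exists K : R, forall (m : J) (x y : 'rV[R]_d),
     degp m <= c -> `|g y x m| <= K * enorm (y - x) `^ degp m) /\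
  (forall c : R, exists K : R, forall (t : I) (s : R) (x : 'rV[R]_d),
     deg t <= c -> 0 < s <= 1 ->
     `|pair_heat (Pib x t) s x| <= K * s `^ (deg t / 2)).

Definition in_Dgamma (I J : choiceType) (deg : I -> R)
  (copT : I -> I -> J -> R) (g : 'rV[R]_d -> 'rV[R]_d -> J -> R)
  (gamma : R) (v : 'rV[R]_d -> I -> R) : Prop :=
  (forall (x : 'rV[R]_d) (t : I), v x t != 0 -> deg t < gamma) /\
  exists K : R, forall t : I, deg t < gamma ->
    (forall x : 'rV[R]_d, `|v x t| <= K) /\
    (forall x y : 'rV[R]_d, x != y ->
       `|v y t - Gam copT (g y x) (v x) t| <= K * enorm (y - x) `^ (gamma - deg t)).

End Defs.

(* Since Pi_y = Pi_x o Gamma_{xy}, Lambda_y - Lambda_x = Pi_x (Gamma_{xy} v(y) - v(x)).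
   Expanding in the basis of T_{<gamma}, which Gamma preserves because the
   coaction lowers degrees, the coefficient on tau is bounded by the
   D^gamma estimate |x - y|^{gamma - |tau|} <= (|y - x| + t^{1/2})^{gamma - |tau|},
   and the pairing <Pi_x tau, p_t(x, .)> by the model bound t^{|tau|/2}. *)

From HB Require Import structures.
From mathcomp Require Import all_boot all_order all_algebra.
From mathcomp Require Import all_classical all_reals all_analysis.
From mathcomp Require Import finmap.
Set Implicit Arguments. Unset Strict Implicit.
Import Order.TTheory GRing.Theory Num.Theory.
Local Open Scope classical_set_scope.
Local Open Scope ring_scope.

Lemma fsumr_neq0 (R : numDomainType) (T : choiceType) (P : set T) (F : T -> R) :
  \sum_(i \in P) F i != 0 -> exists i, F i != 0.
Proof.
apply: contraNP => /forallNP F0; apply/eqP/fsbig1 => i _.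
apply/eqP/negPn/negP; exact: F0.
Qed.

Lemma fsumT_finite_support (R : numDomainType) (T : choiceType) (S : set T)
    (F : T -> R) :
  finite_set S -> (forall i, F i != 0 -> S i) ->
  \sum_(i \in [set: T]) F i = \sum_(i <- fset_set S) F i.
Proof.
move=> Sfin FS; apply: fsbigTE => i; rewrite in_fset_set // notin_setE => Si.
by case: (eqVneq (F i) 0) => // /FS.
Qed.

Lemma enorm_distC (R : realType) (d : nat) (x y : 'rV[R]_d) :
  enorm (x - y) = enorm (y - x).
Proof.
by rewrite /enorm; congr Num.sqrt; apply: eq_bigr => i _; rewrite -opprB mxE sqrrN.
Qed.

Lemma enorm_ge0 (R : realType) (d : nat) (x : 'rV[R]_d) : 0 <= enorm x.
Proof. exact: sqrtr_ge0. Qed.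

Section BelowGamma.
Variables (R : realType) (I J : choiceType) (deg : I -> R) (degp : J -> R).
Variable copT : I -> I -> J -> R.
Hypothesis deg_sublevel_finite : forall c, finite_set [set i : I | deg i <= c].
Hypothesis degp_ge0 : forall m, 0 <= degp m.
Hypothesis copT_finite : forall t, finite_set [set p : I * J | copT t p.1 p.2 != 0].
Hypothesis deg_copT : forall t s m, copT t s m != 0 -> deg s = deg t - degp m.

Variable gamma : R.

(* Every [\sum_(i \in _)]
   below is a finitely supported sum (zero when the support is infinite), so
   they are all first reduced to sums over the finite basis of T_{<gamma}. *)
Definition supported_below (h : I -> R) := forall i, h i != 0 -> deg i < gamma.

Let basis_below := fset_set [set i : I | deg i < gamma].

Let basis_below_finite : finite_set [set i : I | deg i < gamma].
Proof. by apply: sub_finite_set (deg_sublevel_finite gamma) => i /ltW. Qed.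

Lemma in_basis_below i : (i \in basis_below) = (deg i < gamma).
Proof. by rewrite in_fset_set // mem_setE. Qed.

Lemma fsumT_below (F : I -> R) : supported_below F ->
  \sum_(i \in [set: I]) F i = \sum_(i <- basis_below) F i.
Proof. exact: fsumT_finite_support. Qed.

Lemma dirac_below i : deg i < gamma -> supported_below (dirac_coef R i).
Proof. by move=> lt_i j; rewrite /dirac_coef; case: (eqVneq i j) => [<-|]; rewrite ?eqxx. Qed.

Lemma Gam_below gm h : supported_below h -> supported_below (Gam copT gm h).
Proof.
move=> h_below s /fsumr_neq0 [[i m]] /=.
rewrite !mulf_eq0 !negb_or => /andP[/andP[/h_below lt_i /deg_copT ->] _].
by apply: le_lt_trans lt_i; rewrite gerBl degp_ge0.
Qed.

Let pairs_below_set s :=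
  [set i : I | deg i < gamma] `*`` fun i => [set m : J | copT i s m != 0].

Let pairs_below s := fset_set (pairs_below_set s).

Let pairs_below_finite s : finite_set (pairs_below_set s).
Proof.
apply: finite_setXR => // i _; apply: sub_finite_set (finite_image snd (copT_finite i)).
by move=> m /= copT_m; exists (s, m).
Qed.

Lemma in_pairs_below s p :
  (p \in pairs_below s) = (deg p.1 < gamma) && (copT p.1 s p.2 != 0).
Proof. rewrite in_fset_set //; apply/idP/andP => [/set_mem []|[? ?]] //; exact/mem_set. Qed.

Lemma Gam_pairs_below gm h s : supported_below h ->
  Gam copT gm h s = \sum_(p <- pairs_below s) h p.1 * copT p.1 s p.2 * gm p.2.
Proof.
move=> h_below; apply: fsumT_finite_support => // -[i m] /=.
by rewrite !mulf_eq0 !negb_or => /andP[/andP[/h_below ? ?] _].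
Qed.

Lemma Gam_linear gm h s : supported_below h ->
  Gam copT gm h s = \sum_(i <- basis_below) h i * Gam copT gm (dirac_coef R i) s.
Proof.
move=> h_below; rewrite Gam_pairs_below //.
transitivity (\sum_(i <- basis_below) \sum_(p <- pairs_below s)
    h i * ((i == p.1)%:R * copT p.1 s p.2 * gm p.2)).
  rewrite exchange_big /=; apply: eq_big_seq => p; rewrite in_pairs_below.
  case/andP => lt_p _; rewrite (bigD1_seq p.1) ?in_basis_below ?fset_uniq //=.
  by rewrite eqxx mul1r !mulrA big1 ?addr0 // => i /negbTE ->; rewrite !mul0r mulr0.
apply: eq_big_seq => i; rewrite in_basis_below => lt_i.
by rewrite (Gam_pairs_below _ _ (dirac_below lt_i)) big_distrr.
Qed.

Lemma PiT_below (d : nat) (P : I -> Dist R d) h phi : supported_below h ->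
  PiT P h phi = \sum_(i <- basis_below) h i * P i phi.
Proof.
move=> h_below; apply: fsumT_below => i.
by rewrite mulf_eq0 negb_or => /andP[/h_below].
Qed.

Section Model.
Variables (d : nat) (Pib : 'rV[R]_d -> I -> Dist R d).
Variable g : 'rV[R]_d -> 'rV[R]_d -> J -> R.
Hypothesis Pib_reexpand :
  forall x y t, Pib x t = PiT (Pib y) (Gam copT (g y x) (dirac_coef R t)).

Lemma PiT_reexpand x y h phi : supported_below h ->
  PiT (Pib y) h phi = PiT (Pib x) (Gam copT (g x y) h) phi.
Proof.
move=> h_below; rewrite PiT_below // [RHS]PiT_below; last exact: Gam_below.
under eq_big_seq => i.
  rewrite in_basis_below => lt_i.
  rewrite (Pib_reexpand y x) PiT_below ?big_distrr; last exact/Gam_below/dirac_below.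
  over.
rewrite exchange_big /=; apply: eq_bigr => s _.
by rewrite Gam_linear // big_distrl; apply: eq_bigr => i _; rewrite mulrA.
Qed.

Variables (v : 'rV[R]_d -> I -> R) (K K' : R).
Hypothesis v_below : forall x, supported_below (v x).
Hypothesis v_Dgamma : forall s, deg s < gamma -> forall x y, x != y ->
  `|v y s - Gam copT (g y x) (v x) s| <= K * enorm (y - x) `^ (gamma - deg s).
Hypothesis Pib_heat : forall s t x, deg s <= gamma -> 0 < t <= 1 ->
  `|pair_heat (Pib x s) t x| <= K' * t `^ (deg s / 2).

Lemma coherence_estimate x y t : 0 < t <= 1 ->
  `|pair_heat (PiT (Pib y) (v y)) t x - pair_heat (PiT (Pib x) (v x)) t x|
    <= `|K| * `|K'| * \sum_(s \in [set s : I | deg s < gamma])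
         t `^ (deg s / 2) * (enorm (y - x) + Num.sqrt t) `^ (gamma - deg s).
Proof.
move=> t01; have [<-|xy] := eqVneq x y.
  rewrite subrr normr0 mulr_ge0 ?mulr_ge0 // fsumr_ge0 // => s _.
  by rewrite mulr_ge0 ?powR_ge0.
rewrite /pair_heat (PiT_reexpand x y) // !PiT_below //; last exact: Gam_below.
rewrite -sumrB (fsbig_finite _ _ basis_below_finite) big_distrr /=.
apply: le_trans (ler_norm_sum _ _ _) _.
rewrite big_seq [leRHS]big_seq; apply: ler_sum => s; rewrite in_basis_below => lt_s.
have coef_le : `|Gam copT (g x y) (v y) s - v x s|
    <= `|K| * (enorm (y - x) + Num.sqrt t) `^ (gamma - deg s).
  rewrite distrC; apply: le_trans (v_Dgamma lt_s (_ : y != x)) _; first by rewrite eq_sym.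
  apply: le_trans (ler_wpM2r (powR_ge0 _ _) (ler_norm K)) _.
  apply: ler_wpM2l => //; apply: ge0_ler_powR.
  - by rewrite subr_ge0 ltW.
  - by rewrite nnegrE enorm_ge0.
  - by rewrite nnegrE addr_ge0 ?enorm_ge0 ?sqrtr_ge0.
  - by rewrite enorm_distC lerDl sqrtr_ge0.
have pair_le : `|Pib x s (heat t x)| <= `|K'| * t `^ (deg s / 2).
  exact: le_trans (Pib_heat x (ltW lt_s) t01) (ler_wpM2r (powR_ge0 _ _) (ler_norm K')).
rewrite -mulrBl normrM [t `^ _ * _]mulrC mulrACA.
exact: ler_pM coef_le pair_le.
Qed.

End Model.

End BelowGamma.

Theorem proposition7 (R : realType) (d : nat) (I J : choiceType)
  (deg : I -> R) (degp : J -> R)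
  (mulc : J -> J -> J -> R) (unitp : J -> R) (counit : J -> R)
  (cop : J -> J -> J -> R) (antip : J -> J -> R) (copT : I -> I -> J -> R)
  (HS : is_concrete_reg_structure deg degp mulc unitp counit cop antip copT)
  (Pib : 'rV[R]_d -> I -> Dist R d) (g : 'rV[R]_d -> 'rV[R]_d -> J -> R)
  (HM : is_model deg degp mulc unitp cop copT Pib g)
  (gamma : R) (v : 'rV[R]_d -> I -> R)
  (Hv : in_Dgamma deg copT g gamma v) :
  let Lambda := fun x : 'rV[R]_d => PiT (Pib x) (v x) in
  exists C : R, forall (x y : 'rV[R]_d) (t : R), 0 < t <= 1 ->
    `|pair_heat (Lambda y) t x - pair_heat (Lambda x) t x|
      <= C * \sum_(s \in [set s : I | deg s < gamma])
               t `^ (deg s / 2) * (enorm (y - x) + Num.sqrt t) `^ (gamma - deg s).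
Proof.
move=> Lambda.
case: HS => deg_finite [degp_ge0 [_ [_ [_ [_ [_ [_ [_ [_ [_ [_ [_ [_ [_ [_ [_ [_ [_
  [copT_finite [deg_copT _]]]]]]]]]]]]]]]]]]]].
case: HM => _ [_ [Pib_reexpand [_ Pib_heat]]].
case: Hv => v_below [K v_Dgamma].
have [K' Pib_heat_le] := Pib_heat gamma.
exists (`|K| * `|K'|) => x y t t01.
exact: (coherence_estimate deg_finite degp_ge0 copT_finite deg_copT Pib_reexpand
          v_below (fun s lt_s => (v_Dgamma s lt_s).2) Pib_heat_le).
Qed.
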